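(* Let $Z = (G, c)$ and $Z' = (G', c')$ be zonotopes in $\mathbb{R}^n$ with $G = [g_1, \dots, g_N]$ and $G' = [\alpha_1 g_1, \dots, \alpha_N g_N]$ for some $\alpha_1, \dots, \alpha_N \in [0,1]$ (i.e. $Z'$ is aligned with $Z$). Then $$Z \ominus Z' = \big([(1-\alpha_1) g_1, (1-\alpha_2) g_2, \dots, (1-\alpha_N) g_N], \, c - c'\big).$$
   Context: A zonotope with generator-representation $(G, c)$, where $G = [g_1, \dots, g_N] \in \mathbb{R}^{n \times N}$ and $c \in \mathbb{R}^n$, is the set $\{c + \sum_{i=1}^N \theta_i g_i \mid \theta_i \in [-1,1], i = 1, \dots, N\}$; it is denoted $(G, c)$. The Minkowski difference of sets $X, Y \subseteq \mathbb{R}^n$ is $X \ominus Y = \{z \in \mathbb{R}^n \mid z + Y \subseteq X\}$. *)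

(* vectors in R^n are column vectors 'cV[R]_n,
   generator matrices are 'M[R]_(n, N) (column j = generator g_j). *)
From mathcomp Require Import all_boot all_order all_algebra.
Set Implicit Arguments. Unset Strict Implicit. Unset Printing Implicit Defensive.
Import Order.TTheory GRing.Theory Num.Theory.
Local Open Scope ring_scope.

Definition zonotope (R : realFieldType) (n N : nat)
    (G : 'M[R]_(n, N)) (c : 'cV[R]_n) : 'cV[R]_n -> Prop :=
  fun z => exists theta : 'cV[R]_N,
      (forall i : 'I_N, -1 <= theta i 0 <= 1) /\ z = c + G *m theta.

Definition minkowski_diff (R : realFieldType) (n : nat)
    (X Y : 'cV[R]_n -> Prop) : 'cV[R]_n -> Prop :=
  fun z => forall y, Y y -> X (z + y).

Definition scale_gens (R : realFieldType) (n N : nat)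
    (a : 'I_N -> R) (G : 'M[R]_(n, N)) : 'M[R]_(n, N) :=
  \matrix_(i < n, j < N) (a j * G i j).

From mathcomp Require Import all_boot all_order all_algebra.
From mathcomp Require Import ring lra.
Set Implicit Arguments. Unset Strict Implicit. Unset Printing Implicit Defensive.
Import Order.TTheory GRing.Theory Num.Theory.
Local Open Scope ring_scope.

(* Write G(B(b)) for the image under G of the box |q_i| <= b_i; for b >= 0 it is
   the zonotope with generators b_i g_i.  Boxes add, which gives the inclusion
   from right to left.  Conversely, with w = z - (c - c') the hypothesis reads
   w + G(B(alpha)) \subset G(B(1)), and the box is shrunk one coordinate at a
   time: if x + a g_j and x - a g_j both lie in G(B(b)), subtracting a e_j from
   the first representation and adding it to the second gives two
   representations of x, with j-th coordinates at most b_j - a and at least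
   a - b_j respectively, so a convex combination of them puts x in the box
   with b_j lowered to b_j - a. *)

Lemma convex_comb_norm_le (R : realFieldType) (s t e : R) :
  s <= e -> - e <= t -> 0 <= e ->
  exists2 l, 0 <= l <= 1 & `|l * s + (1 - l) * t| <= e.
Proof.
move=> s_le t_ge e_ge0.
have [s_ge|s_lt] := lerP (- e) s.
  by exists 1; rewrite ?ler01 ?lexx // subrr mul0r addr0 mul1r ler_norml s_ge.
have [t_le|t_gt] := lerP t e.
  by exists 0; rewrite ?ler01 ?lexx // subr0 mul0r add0r mul1r ler_norml t_ge.
(* now s < - e <= e < t, so some combination vanishes *)
have ts_gt0 : 0 < t - s by lra.
exists (t / (t - s)).
  by rewrite divr_ge0 ?ler_pdivrMr ?mul1r /=; lra.
suff -> : t / (t - s) * s + (1 - t / (t - s)) * t = 0 by rewrite normr0.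
by field; lra.
Qed.

Section BoxImage.
Variables (R : realFieldType) (n N : nat) (G : 'M[R]_(n, N)).

Definition box (b : 'I_N -> R) (q : 'cV[R]_N) : Prop := forall i, `|q i 0| <= b i.

Definition box_image (b : 'I_N -> R) (x : 'cV[R]_n) : Prop :=
  exists2 q, box b q & x = G *m q.

Lemma box_image_le (b b' : 'I_N -> R) x :
  (forall i, b i <= b' i) -> box_image b x -> box_image b' x.
Proof. by move=> le_bb' [q qb ->]; exists q => // i; apply: le_trans (qb i) _. Qed.

Lemma box_imageD (b b' : 'I_N -> R) x x' :
  box_image b x -> box_image b' x' -> box_image (fun i => b i + b' i) (x + x').
Proof.
move=> [q qb ->] [q' qb' ->]; exists (q + q'); last by rewrite mulmxDr.
by move=> i; rewrite mxE (le_trans (ler_normD _ _)) ?lerD.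
Qed.

Lemma scale_gens_mulmx (a : 'I_N -> R) (t : 'cV[R]_N) :
  scale_gens a G *m t = G *m \col_i (a i * t i 0).
Proof.
apply/matrixP => i k; rewrite !mxE; apply: eq_bigr => j _.
by rewrite !mxE (ord1 k) mulrCA mulrA.
Qed.

Lemma zonotopeE (c z : 'cV[R]_n) :
  zonotope G c z <-> box_image (fun=> 1) (z - c).
Proof.
split=> [[t [t1 ->]] | [q q1 zE]].
  by exists t; [move=> i; rewrite ler_norml | rewrite addrC addKr].
by exists q; split; [move=> i; rewrite -ler_norml | rewrite -zE addrC subrK].
Qed.

Lemma zonotope_scale_gensE (b : 'I_N -> R) (c z : 'cV[R]_n) :
  (forall i, 0 <= b i) ->
  zonotope (scale_gens b G) c z <-> box_image b (z - c).
Proof.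
move=> b_ge0; split=> [[t [t1 ->]] | [q qb zE]].
  exists (\col_i (b i * t i 0)); last by rewrite scale_gens_mulmx addrC addKr.
  move=> i; rewrite mxE normrM ger0_norm // ler_piMr //.
  by rewrite ler_norml.
(* where b i = 0 the box forces q i 0 = 0, so any theta i in [-1, 1] works *)
exists (\col_i (if b i == 0 then 0 else q i 0 / b i)); split.
  move=> i; rewrite mxE; case: eqP => [_|/eqP bi0]; first by rewrite lerN10 ler01.
  rewrite -ler_norml normrM normfV (ger0_norm (b_ge0 i)).
  by rewrite ler_pdivrMr ?mul1r // lt_def bi0 b_ge0.
rewrite scale_gens_mulmx -[z](subrK c) zE addrC; congr (_ + _ *m _).
apply/matrixP => i k; rewrite !mxE (ord1 k).
case: eqP => [bi0|/eqP bi0]; last by rewrite mulrC divfK.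
by have := qb i; rewrite bi0 mulr0 normr_le0 => /eqP.
Qed.

Lemma box_image_shrink_coord (b : 'I_N -> R) (j : 'I_N) (a : R) x :
  0 <= a -> a <= b j ->
  box_image b (x + a *: col j G) -> box_image b (x - a *: col j G) ->
  box_image (fun i => if i == j then b j - a else b i) x.
Proof.
move=> a_ge0 a_le [q1 q1b x1E] [q2 q2b x2E].
pose e : 'cV[R]_N := delta_mx j 0.
have xE1 : x = G *m (q1 - a *: e) by rewrite mulmxBr -scalemxAr -colE -x1E addrK.
have xE2 : x = G *m (q2 + a *: e) by rewrite mulmxDr -scalemxAr -colE -x2E addrNK.
have [l l01 lj] : exists2 l, 0 <= l <= 1 &
    `|l * (q1 j 0 - a) + (1 - l) * (q2 j 0 + a)| <= b j - a.
  move: (q1b j) (q2b j); rewrite !ler_norml => /andP[? ?] /andP[? ?].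
  by apply: convex_comb_norm_le; lra.
exists (l *: (q1 - a *: e) + (1 - l) *: (q2 + a *: e)); last first.
  by rewrite mulmxDr -!scalemxAr -xE1 -xE2 -scalerDl addrC subrK scale1r.
move=> i; rewrite !mxE; case: eqP => [->|_]; first by rewrite !mulr1.
rewrite !mulr0 subr0 addr0.
move: (q1b i) (q2b i) l01; rewrite !ler_norml => /andP[? ?] /andP[? ?] /andP[? ?].
apply/andP; split; nra.
Qed.

Lemma box_image_shrink (a b : 'I_N -> R) x :
  (forall i, 0 <= a i <= b i) ->
  (forall y, box_image a y -> box_image b (x + y)) ->
  box_image (fun i => b i - a i) x.
Proof.
move=> ab x_ab.
suff shrink_on s : uniq s -> forall p, box a p -> {in s, forall i, p i 0 = 0} ->
    box_image (fun i => if i \in s then b i - a i else b i) (x + G *m p).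
  have a0 : box a 0 by move=> i; rewrite mxE normr0; case/andP: (ab i).
  have := shrink_on (enum 'I_N) (enum_uniq _) 0 a0 (fun i _ => mxE _ _ _ _).
  by rewrite mulmx0 addr0; apply: box_image_le => i; rewrite mem_enum.
elim: s => [_ p pa _ | j s IHs /andP[js us] p pa p0].
  by apply: box_image_le (x_ab _ _) => [i|]; [rewrite in_nil | exists p].
have pj0 : p j 0 = 0 by apply: p0; rewrite mem_head.
have shrink_pm t : `|t| <= a j ->
    box_image (fun i => if i \in s then b i - a i else b i) (x + G *m p + t *: col j G).
  move=> ta; rewrite colE scalemxAr -addrA -mulmxDr; apply: IHs => // [i|i si].
    by rewrite !mxE; case: eqP => [->|_]; rewrite ?pj0 ?add0r ?mulr1 // mulr0 addr0.
  rewrite !mxE p0 ?inE ?si ?orbT //; case: eqP => [ij|_]; last by rewrite mulr0 addr0.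
  by move: js; rewrite -ij si.
have aj_ge0 : 0 <= a j by case/andP: (ab j).
have aj_le : a j <= (if j \in s then b j - a j else b j).
  by rewrite (negbTE js); case/andP: (ab j).
have aj_norm : `|a j| <= a j by rewrite ger0_norm.
have x_minus := shrink_pm (- a j) ltac:(by rewrite normrN).
rewrite scaleNr in x_minus.
apply: box_image_le (box_image_shrink_coord aj_ge0 aj_le (shrink_pm _ aj_norm) x_minus) => i.
by rewrite in_cons; case: eqP => [->|_] /=; rewrite ?(negbTE js).
Qed.

End BoxImage.

Theorem proposition3 (R : realFieldType) (n N : nat)
    (G : 'M[R]_(n, N)) (c c' : 'cV[R]_n) (alpha : 'I_N -> R) :
  (forall j : 'I_N, 0 <= alpha j <= 1) ->
  forall z : 'cV[R]_n,
    minkowski_diff (zonotope G c) (zonotope (scale_gens alpha G) c') z <->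
    zonotope (scale_gens (fun j => 1 - alpha j) G) (c - c') z.
Proof.
move=> alpha01 z.
have alpha_ge0 i : 0 <= alpha i by case/andP: (alpha01 i).
have alphaC_ge0 i : 0 <= 1 - alpha i by rewrite subr_ge0; case/andP: (alpha01 i).
have shiftE y : z + (c' + y) - c = z - (c - c') + y.
  by rewrite opprB !addrA (addrAC _ y).
rewrite zonotope_scale_gensE //; split=> [z_diff | z_img y].
  apply: box_image_shrink => // y y_img; rewrite -shiftE -zonotopeE.
  by apply: z_diff; rewrite zonotope_scale_gensE // addrC addKr.
rewrite zonotope_scale_gensE // zonotopeE => y_img.
have := box_imageD z_img y_img; rewrite -shiftE subrKC.
by apply: box_image_le => i; rewrite subrK.
Qed.
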